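(* For any signature $\Sigma$, the quadruple consisting of the class of $\Sigma$-forest-like alphabets, the disjoint sum operation $\mathbin{+\!\!+}$, the maps $r_A$, and the alphabet $A_p(\Sigma)$ is a polynomial realization of the Hopf algebra $\mathbf N(T(\Sigma))$. That is: (i) $\mathbin{+\!\!+}$ is associative; (ii) for every $\Sigma$-forest-like alphabet $A$, $r_A:\mathbf N(T(\Sigma))\to\mathbb K\langle A\rangle$ is a graded unital associative algebra morphism; (iii) for all $\Sigma$-forest-like alphabets $A_1,A_2$ and every $x\in\mathbf N(T(\Sigma))$, $\theta_{A_1,A_2}(r_{A_1\mathbin{+\!\!+}A_2}(x))=(r_{A_1}\otimes r_{A_2})(\Delta x)$; (iv) $r_{A_p(\Sigma)}$ is injective.
   Context: $\mathbb K$ is a field of characteristic zero; $[P]$ is $1$ if $P$ holds, $0$ otherwise. A signature is a set $\Sigma$ with arity map $|\cdot|:\Sigma\to\mathbb N$. A $\Sigma$-term is the leaf $\bot$ or $s(t_1,\dots,t_n)$ with $s$ of arity $n$, $t_i$ terms; degree = number of internal nodes, arity $|t|$ = number of leaves. $T(\Sigma)$ is the free operad: $t[t_1,\dots,t_{|t|}]$ grafts $t_i$ on the $i$-th leaf of $t$. A $\Sigma$-forest is a finite word of terms; reduced if no term is $\bot$; $\mathrm{rd}$ deletes terms equal to $\bot$. Internal nodes of a forest $f$ are identified with $1,\dots,\deg f$ by preorder; $d_f(i)$ decoration of $i$; $i\to^f_j i'$ means $i'$ is the $j$-th child of $i$; roots are the roots of terms. $\mathbf N(T(\Sigma))$: basis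 $E_f$ ($f$ reduced), product $E_{f_1}E_{f_2}=E_{f_1f_2}$, grading $\deg f$, coproduct the algebra morphism with $\Delta E_t=\sum E_{\mathrm{rd}(t')}\otimes E_{\mathrm{rd}(t_1\cdots t_{|t'|})}$ over all $t',t_1,\dots$ with $t=t'[t_1,\dots,t_{|t'|}]$. A $\Sigma$-forest-like alphabet is a set $A$ with arbitrary: subset $R^A$, subsets $D^A_s$ ($s\in\Sigma$), binary relations $\to^A_j$ ($j\ge1$). $\mathbb K\langle A\rangle$: noncommutative polynomials over $A$ with possibly infinite support and bounded degree. A word $w\in A^*$ is $A$-compatible with $f$ if it has length $\deg f$, $w(i)\in R^A$ for each root $i$, $w(i)\in D^A_{d_f(i)}$ for each $i$, and $i\to^f_j i'$ implies $w(i)\to^A_j w(i')$. $r_A(E_f)=\sum_{w\in A^*}[w\ A\text{-compatible with }f]\,w$. The disjoint sum $A_1\mathbin{+\!\!+}A_2$ is $A_1\sqcup A_2$ with $R=R^{A_1}\sqcup R^{A_2}$, $D_s=D^{A_1}_s\sqcup D^{A_2}_s$, and $a\to_j a'$ iff ($a,a'\in A_1$, $a\to^{A_1}_j a'$) or ($a,a'\in A_2$, $a\to^{A_2}_j a'$) or ($a\in A_1$, $a'\in A_2$, $a'\in R^{A_2}$). $\theta_{A_1,A_2}$ is the linear map $w\mapsto w_{|A_1}\otimes w_{|A_2}$. The alphabet of positions $A_p(\Sigma)=\{a^s_u:s\in\Sigma,u\in\mathbb N^*\}$ has root relation $\{a^s_{0^\ell}\}$, $D_s=\{a^s_u:u\in\mathbb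 N^*\}$, and $a^s_u\to_j a^{s'}_v$ iff $v=u\,j\,0^\ell$ for some $\ell\in\mathbb N$. *)

From Stdlib Require Import ClassicalEpsilon.
From mathcomp Require Import all_boot all_order all_algebra.
Set Implicit Arguments.
Unset Strict Implicit.
Unset Printing Implicit Defensive.
Import GRing.Theory.
Local Open Scope ring_scope.

Section Terms.
Variable S : Type.

(* Raw terms: the leaf (bottom) or s(t_1,...,t_n); well-formedness w.r.t.   *)
(* the arity map is the predicate [wf_term] below.                           *)
Inductive term : Type := Leaf | Node of S & seq term.

Variable ar : S -> nat.

Fixpoint wf_term (t : term) : bool :=
  match t with
  | Leaf => true
  | Node s ts => (size ts == ar s) && all wf_term ts
  end.

Fixpoint tdeg (t : term) : nat :=
  match t with Leaf => 0%N | Node _ ts => (sumn (map tdeg ts)).+1 end.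

Fixpoint tleaves (t : term) : nat :=
  match t with Leaf => 1%N | Node _ ts => sumn (map tleaves ts) end.

(* Grafting t[t_1,...,t_|t|]: the i-th leaf (left to right) is replaced by t_i. *)
Fixpoint graft_aux (t : term) (ts : seq term) : term * seq term :=
  match t with
  | Leaf => if ts is u :: us then (u, us) else (Leaf, [::])
  | Node s cs =>
    let fix go (cs : seq term) (ts : seq term) : seq term * seq term :=
      match cs with
      | [::] => ([::], ts)
      | c :: cs0 => let p := graft_aux c ts in
                    let q := go cs0 p.2 in (p.1 :: q.1, q.2)
      end in
    let q := go cs ts in (Node s q.1, q.2)
  end.
Definition graft (t : term) (ts : seq term) : term := (graft_aux t ts).1.

Definition forest := seq term.
Definition fdeg (f : forest) : nat := sumn (map tdeg f).
Definition isNode (t : term) : bool := if t is Node _ _ then true else false.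
Definition reduced (f : forest) : bool := all isNode f.
Definition rd (f : forest) : forest := filter isNode f.

(* All decompositions t = t'[t_1,...,t_|t'|] (t' and the t_i Sigma-terms),   *)
(* listed as pairs (t', [:: t_1; ...; t_|t'|]). For t = s(u_1..u_n) either   *)
(* t' = leaf (and the list is [:: t]) or t' = s(t'_1..t'_n) with each        *)
(* u_k = t'_k[...]; for t = leaf the only one is (leaf, [:: leaf]).          *)
Fixpoint prodseq (X : Type) (l : seq (seq X)) : seq (seq X) :=
  match l with
  | [::] => [:: [::]]
  | a :: r => flatten [seq [seq x :: y | y <- prodseq r] | x <- a]
  end.

Fixpoint decomps (t : term) : seq (term * seq term) :=
  match t with
  | Leaf => [:: (Leaf, [:: Leaf])]
  | Node s us =>
    (Leaf, [:: Node s us]) ::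
    [seq (Node s (map fst l), flatten (map snd l)) | l <- prodseq (map decomps us)]
  end.

(* Preorder numbering of internal nodes (0-based: node i <-> letter i of w,  *)
(* i.e. the paper's node i+1).  For each node: its decoration and the list  *)
(* of pairs (j, i') meaning "i' is the j-th child of i" (j >= 1), for the   *)
(* children which are internal nodes.                                       *)
Fixpoint tnodes (t : term) (off : nat) : seq (S * seq (nat * nat)) :=
  match t with
  | Leaf => [::]
  | Node s ts =>
    let fix go (ts : seq term) (j o : nat)
        : seq (nat * nat) * seq (S * seq (nat * nat)) :=
      match ts with
      | [::] => ([::], [::])
      | u :: us => let l := tnodes u o in
                   let q := go us j.+1 (o + size l) in
                   ((if u is Node _ _ then (j, o) :: q.1 else q.1), l ++ q.2)
      end in
    let q := go ts 1%N off.+1 in (s, q.1) :: q.2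
  end.

(* For a forest: (indices of roots, node data), in preorder. *)
Fixpoint fnodes (f : forest) (off : nat) : seq nat * seq (S * seq (nat * nat)) :=
  match f with
  | [::] => ([::], [::])
  | t :: f' => let l := tnodes t off in
               let q := fnodes f' (off + size l) in
               ((if t is Node _ _ then off :: q.1 else q.1), l ++ q.2)
  end.

Record alphabet := Alphabet {
  letter :> Type;
  aR : letter -> Prop;
  aD : S -> letter -> Prop;
  aE : nat -> letter -> letter -> Prop
}.

Definition compatible (A : alphabet) (w : seq A) (f : forest) : Prop :=
  let rs := (fnodes f 0).1 in
  let ns := (fnodes f 0).2 in
  [/\ size w = fdeg f,
      (forall i a, i \in rs -> onth w i = Some a -> aR a),
      (forall i s es a, onth ns i = Some (s, es) -> onth w i = Some a -> aD s a)
    & (forall i s es j i' a a', onth ns i = Some (s, es) -> (j, i') \in es ->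
         onth w i = Some a -> onth w i' = Some a' -> aE j a a')].

Definition dsum (A1 A2 : alphabet) : alphabet :=
  @Alphabet (A1 + A2)%type
    (fun a => match a with inl x => aR x | inr y => aR y end)
    (fun s a => match a with inl x => aD s x | inr y => aD s y end)
    (fun j a b => match a, b with
                  | inl x, inl y => aE j x y
                  | inr x, inr y => aE j x y
                  | inl _, inr y => aR y
                  | inr _, inl _ => False
                  end).

Definition alph_iso (A B : alphabet) (phi : A -> B) : Prop :=
  [/\ bijective phi,
      (forall a, aR (phi a) <-> aR a),
      (forall s a, aD s (phi a) <-> aD s a)
    & (forall j a b, aE j (phi a) (phi b) <-> aE j a b)].

(* The alphabet of positions A_p(Sigma): a^s_u is the pair (s, u). *)
Definition Apos : alphabet :=
  @Alphabet (S * seq nat)%type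
    (fun a => exists l, a.2 = nseq l 0%N)
    (fun s a => a.1 = s)
    (fun j a b => exists l, b.2 = a.2 ++ j :: nseq l 0%N).

End Terms.

Arguments Leaf {S}.

Definition sum_assocr (A B C : Type) (x : (A + B) + C) : A + (B + C) :=
  match x with
  | inl (inl a) => inl a
  | inl (inr b) => inr (inl b)
  | inr c => inr (inr c)
  end.

(* Shuffles of u and v: exactly the words w over A1 + A2 with w_|A1 = u and  *)
(* w_|A2 = v (each listed once).                                             *)
Fixpoint shuffle (A1 A2 : Type) (u : seq A1) (v : seq A2) : seq (seq (A1 + A2)) :=
  match u with
  | [::] => [:: map inr v]
  | a :: u' =>
    let fix sh2 (v : seq A2) :=
      match v with
      | [::] => [:: map inl u]
      | b :: v' => map (cons (inl a)) (shuffle u' v) ++ map (cons (inr b)) (sh2 v')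
      end in sh2 v
  end.

Definition restrl (A1 A2 : Type) (w : seq (A1 + A2)) : seq A1 :=
  pmap (fun x => if x is inl a then Some a else None) w.
Definition restrr (A1 A2 : Type) (w : seq (A1 + A2)) : seq A2 :=
  pmap (fun x => if x is inr a then Some a else None) w.

Section Lin.
Local Unset Implicit Arguments.
Variable K : fieldType.

Definition ind (P : Prop) : K :=
  if excluded_middle_informative P then 1 else 0.

(* K<A>: coefficient functions on words (possibly infinite support); an     *)
(* element must have bounded degree.                                        *)
Definition bounded (A : Type) (p : seq A -> K) : Prop :=
  exists d, forall w, (d < size w)%N -> p w = 0.
Definition oneP (A : Type) : seq A -> K := fun w => if w is [::] then 1 else 0.
Definition mulP (A : Type) (p q : seq A -> K) : seq A -> K :=
  fun w => \sum_(i < (size w).+1) p (take i w) * q (drop i w).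

(* theta_{A1,A2} : w |-> w_|A1 (x) w_|A2, extended linearly; the result is  *)
(* given by its coefficient on each pair of words (w1, w2).                 *)
Definition theta (A1 A2 : Type) (p : seq (A1 + A2) -> K) : seq A1 -> seq A2 -> K :=
  fun w1 w2 => \sum_(w <- shuffle w1 w2) p w.

Variable S : Type.

(* Elements of N(T(Sigma)) are finite formal linear combinations of the     *)
(* basis E_f (f a reduced Sigma-forest): lists of (coefficient, forest).     *)
(* Two such lists represent the same element iff [Ncoef] agrees.             *)
Definition Nvec := seq (K * forest S).
Definition validN (ar : S -> nat) (x : Nvec) : bool :=
  all (fun p => reduced p.2 && all (wf_term ar) p.2) x.
Definition Ncoef (x : Nvec) (f : forest S) : K := \sum_(p <- x) p.1 * ind (p.2 = f).
Definition oneN : Nvec := [:: (1, [::])].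
Definition addN (x y : Nvec) : Nvec := x ++ y.
Definition scaleN (c : K) (x : Nvec) : Nvec := [seq (c * p.1, p.2) | p <- x].
Definition mulN (x y : Nvec) : Nvec := [seq (p.1 * q.1, p.2 ++ q.2) | p <- x, q <- y].

(* N (x) N : formal combinations of E_g (x) E_h *)
Definition NNvec := seq (K * forest S * forest S).
Definition mulNN (x y : NNvec) : NNvec :=
  [seq (p.1.1 * q.1.1, p.1.2 ++ q.1.2, p.2 ++ q.2) | p <- x, q <- y].
Definition DeltaT (t : term S) : NNvec :=
  [seq (1, rd [:: tp.1], rd tp.2) | tp <- decomps t].
(* Delta is the algebra morphism: Delta E_{t1...tk} = Delta E_t1 ... Delta E_tk *)
Definition DeltaE (f : forest S) : NNvec :=
  foldr (fun t acc => mulNN (DeltaT t) acc) [:: (1, [::], [::])] f.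
Definition Delta (x : Nvec) : NNvec :=
  flatten [seq [seq (p.1 * q.1.1, q.1.2, q.2) | q <- DeltaE p.2] | p <- x].

Definition rE (A : alphabet S) (f : forest S) : seq A -> K :=
  fun w => ind (compatible w f).
Definition rA (A : alphabet S) (x : Nvec) : seq A -> K :=
  fun w => \sum_(p <- x) p.1 * rE A p.2 w.
(* (r_A1 (x) r_A2) on N (x) N, as coefficients on pairs of words *)
Definition rtens (A1 A2 : alphabet S) (z : NNvec) : seq A1 -> seq A2 -> K :=
  fun w1 w2 => \sum_(p <- z) p.1.1 * (rE A1 p.1.2 w1 * rE A2 p.2 w2).

End Lin.

Arguments ind {K} P.
Arguments bounded {K A} p.
Arguments oneP {K A} w.
Arguments mulP {K A} p q w.
Arguments theta {K A1 A2} p w1 w2.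
Arguments validN {K S} ar x.
Arguments Ncoef {K S} x f.
Arguments oneN {K S}.
Arguments addN {K S} x y.
Arguments scaleN {K S} c x.
Arguments mulN {K S} x y.
Arguments mulNN {K S} x y.
Arguments DeltaT {K S} t.
Arguments DeltaE {K S} f.
Arguments Delta {K S} x.
Arguments rE {K S} A f w.
Arguments rA {K S} A x w.
Arguments rtens {K S} A1 A2 z w1 w2.

From Stdlib Require Import Classical ClassicalEpsilon.
From mathcomp Require Import all_boot all_order all_algebra.
Import GRing.Theory.
Set Implicit Arguments.
Unset Strict Implicit.
Unset Printing Implicit Defensive.
Local Open Scope ring_scope.

(* Compatibility of a word with a forest has a recursive description: [w] is
   compatible with [t_1 ... t_k] iff [w = w_1 ... w_k] with [w_i] compatible
   with [t_i], and with [s(u_1, ..., u_n)] iff [w = a w'_1 ... w'_n] where [a]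
   is a root letter in [D_s] and each [w'_j] is compatible with [u_j], its
   root being a [j]-successor of [a].  Multiplicativity and grading of [r_A]
   follow at once.  For the coproduct: no edge of [A1 ++ A2] leads from [A2]
   back to [A1], so in a word compatible with [t] the [A1]-letters spell an
   upper part [t'] of [t] and the [A2]-letters spell the forest hanging below
   it; this is exactly the sum over [t = t'[t_1, ..., t_|t'|]] defining
   [Delta], and the induction goes through because restricting a shuffle
   commutes with cutting words into a prefix and a suffix.  For injectivity,
   the word of positions of a reduced forest [f] is the only word compatible
   with [f] whose addresses avoid [0], and it determines [f]; hence
   [r_{A_p}(x)] at that word is the coefficient of [E_f] in [x]. *)

Fixpoint AllP (T : Type) (P : T -> Prop) (s : seq T) : Prop :=
  if s is x :: s' then P x /\ AllP P s' else True.

Lemma AllP_cat (T : Type) (P : T -> Prop) s1 s2 :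
  AllP P s1 -> AllP P s2 -> AllP P (s1 ++ s2).
Proof. by elim: s1 => [|x s1 IH] //= [Px H1] H2; split=> //; apply: IH. Qed.

Lemma AllP_all (T : Type) (P : T -> Prop) s : (forall x, P x) -> AllP P s.
Proof. by move=> HP; elim: s => [|x s IH] //=. Qed.

Lemma onth_size_cat (T : Type) (s1 s2 : seq T) x :
  onth (s1 ++ x :: s2) (size s1) = Some x.
Proof. by rewrite onth_cat ltnn subnn. Qed.

Section Compatibility.
Variable S : Type.

Lemma term_nested_ind (P : term S -> Prop) : P Leaf ->
  (forall s ts, AllP P ts -> P (Node s ts)) -> forall t, P t.
Proof.
move=> HL HN; fix IH 1; case=> [|s ts]; first exact: HL.
apply: HN; elim: ts => [|u us IHus]; [exact: I | exact: (conj (IH u) IHus)].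
Qed.

Variable A : alphabet S.

(* [tcompat P t w]: [w] is compatible with the term [t] when the root letter
   is only required to satisfy [P] (so [P = aR] gives the usual condition and
   [P = aE j a] the condition on a [j]-th child of a node labelled [a]). *)
Fixpoint ccompat_with (tc : (A -> Prop) -> term S -> seq A -> Prop) (a : A)
    (j : nat) (ts : seq (term S)) (w : seq A) : Prop :=
  match ts with
  | [::] => w = [::]
  | u :: us => exists w1 w2,
      w = w1 ++ w2 /\ tc (aE j a) u w1 /\ ccompat_with tc a j.+1 us w2
  end.

Fixpoint tcompat (P : A -> Prop) (t : term S) (w : seq A) {struct t} : Prop :=
  match t with
  | Leaf => w = [::]
  | Node s ts => exists a w',
      w = a :: w' /\ P a /\ aD s a /\ ccompat_with tcompat a 1 ts w'
  end.

Notation ccompat := (ccompat_with tcompat).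

Fixpoint fcompat (P : A -> Prop) (f : forest S) (w : seq A) : Prop :=
  match f with
  | [::] => w = [::]
  | t :: f' => exists w1 w2, w = w1 ++ w2 /\ tcompat P t w1 /\ fcompat P f' w2
  end.

Lemma tcompat_nodeE P s ts a w :
  tcompat P (Node s ts) (a :: w) <-> P a /\ aD s a /\ ccompat a 1 ts w.
Proof. by split=> [[b [w' [[<- <-] H]]] | H]; last exists a, w. Qed.

Lemma tcompat_size P t w : tcompat P t w -> size w = tdeg t.
Proof.
elim/term_nested_ind: t P w => [|s ts IH] P w /=; first by move->.
case=> a [w' [-> [_ [_ Hts]]]] /=; congr _.+1.
elim: ts IH 1%N w' Hts => [|u us IHus] /=; first by move=> _ j w' ->.
case=> IHu IHus' j w' [w1 [w2 [-> [H1 H2]]]].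
by rewrite size_cat (IHu _ _ H1) (IHus IHus' _ _ H2).
Qed.

Lemma fcompat_size P f w : fcompat P f w -> size w = fdeg f.
Proof.
elim: f w => [|t f IH] w /=; first by move->.
by case=> w1 [w2 [-> [H1 H2]]]; rewrite size_cat (tcompat_size H1) (IH _ H2).
Qed.

Lemma fcompat_cat P f1 f2 w : fcompat P (f1 ++ f2) w <->
  exists w1 w2, w = w1 ++ w2 /\ fcompat P f1 w1 /\ fcompat P f2 w2.
Proof.
elim: f1 w => [|t f1 IH] w /=.
  by split=> [H | [w1 [w2 [-> [-> H]]]]] //; exists [::], w.
split.
  case=> w1 [w2 [-> [H1 /IH [w3 [w4 [-> [H3 H4]]]]]]].
  by exists (w1 ++ w3), w4; rewrite catA; split=> //; split=> //; exists w1, w3.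
case=> w1 [w2 [-> [[w3 [w4 [-> [H3 H4]]]] H2]]].
by exists w3, (w4 ++ w2); rewrite catA; split=> //; split=> //; apply/IH; exists w4, w2.
Qed.

Lemma fcompat_seq1 P t w : fcompat P [:: t] w <-> tcompat P t w.
Proof.
split=> /=; first by case=> w1 [w2 [-> [H ->]]]; rewrite cats0.
by exists w, [::]; rewrite cats0.
Qed.

Lemma fcompat_rd P f w : fcompat P (rd f) w <-> fcompat P f w.
Proof.
elim: f w => [|[|s ts] f IH] w //=; last first.
  by split; case=> w1 [w2 [-> [H1 /IH H2]]]; exists w1, w2.
by rewrite IH; split=> [H | [w1 [w2 [-> [-> H]]]]] //; exists [::], w.
Qed.

Definition nodes_ok (W : seq A) (off : nat) (l : seq (S * seq (nat * nat))) :=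
  forall k s es a, onth l k = Some (s, es) -> onth W (off + k) = Some a ->
    aD s a /\ (forall j i' a', (j, i') \in es -> onth W i' = Some a' -> aE j a a').

Lemma nodes_ok_nil W off : nodes_ok W off [::].
Proof. by case. Qed.

Lemma nodes_ok_cat W off l1 l2 :
  nodes_ok W off (l1 ++ l2) <-> nodes_ok W off l1 /\ nodes_ok W (off + size l1) l2.
Proof.
split=> [H | [H1 H2] k s es a].
  split=> k s es a Hk; first by apply: H; rewrite onth_cat -onthTE Hk.
  by rewrite -addnA; apply: H; rewrite onth_cat ltnNge leq_addr addKn.
rewrite onth_cat; case: ltnP => Hk; first exact: H1.
by move=> /H2; rewrite -addnA subnKC //; apply.
Qed.

Lemma nodes_ok_cons W off s es l : nodes_ok W off ((s, es) :: l) <->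
  (forall a, onth W off = Some a ->
     aD s a /\ (forall j i' a', (j, i') \in es -> onth W i' = Some a' -> aE j a a'))
  /\ nodes_ok W off.+1 l.
Proof.
split=> [H | [H0 H1] [|k] s' es' a /=].
- by split=> [a | k s' es' a]; [rewrite -[off]addn0; apply: H | rewrite addSnnS; apply: (H k.+1)].
- by case=> <- <-; rewrite addn0; apply: H0.
- by rewrite addnS -addSn; apply: H1.
Qed.

(* The local fixpoint of [tnodes], enumerating the subterms of a node. *)
Fixpoint tnodes_children (ts : seq (term S)) (j o : nat)
    : seq (nat * nat) * seq (S * seq (nat * nat)) :=
  match ts with
  | [::] => ([::], [::])
  | u :: us => let l := tnodes u o in
               let q := tnodes_children us j.+1 (o + size l) in
               ((if u is Node _ _ then (j, o) :: q.1 else q.1), l ++ q.2)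
  end.

Lemma tnodes_nodeE s ts off :
  tnodes (Node s ts) off =
  (s, (tnodes_children ts 1 off.+1).1) :: (tnodes_children ts 1 off.+1).2.
Proof. by []. Qed.

Lemma size_tnodes (t : term S) off : size (tnodes t off) = tdeg t.
Proof.
elim/term_nested_ind: t off => [|s ts IH] off //; rewrite tnodes_nodeE /=; congr _.+1.
elim: ts IH 1%N off.+1 => [|u us IHus] //= [IHu IHus'] j o.
by rewrite size_cat IHu IHus.
Qed.

Lemma split_at (T : Type) (n : nat) (w : seq T) : (n <= size w)%N ->
  exists w1 w2, w = w1 ++ w2 /\ size w1 = n.
Proof.
by move=> Hn; exists (take n w), (drop n w); rewrite cat_take_drop size_takel.
Qed.

(* Bridge to the preorder indexing of [compatible]: [w] is read inside a
   larger word [W0 ++ w ++ W1], starting at position [size W0]. *)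
Definition tcompat_spec (t : term S) := forall (W0 w W1 : seq A) P,
  tcompat P t w <-> [/\ size w = tdeg t,
    isNode t -> forall a, onth (W0 ++ w ++ W1) (size W0) = Some a -> P a
  & nodes_ok (W0 ++ w ++ W1) (size W0) (tnodes t (size W0))].

Lemma ccompat_spec ts : AllP tcompat_spec ts ->
  forall (W0 w W1 : seq A) a j, ccompat a j ts w <->
  [/\ size w = sumn (map (@tdeg S) ts),
      forall j' i' a', (j', i') \in (tnodes_children ts j (size W0)).1 ->
        onth (W0 ++ w ++ W1) i' = Some a' -> aE j' a a'
    & nodes_ok (W0 ++ w ++ W1) (size W0) (tnodes_children ts j (size W0)).2].
Proof.
elim: ts => [_ | u us IHus [IHu IHus']] W0 w W1 a j /=.
  by split=> [-> | [/size0nil ->]] //; split=> //; apply: nodes_ok_nil.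
rewrite size_tnodes.
split.
  case=> w1 [w2 [-> [/(IHu W0 w1 (w2 ++ W1)) [Hs1 Hr1 Hn1]
                    /(IHus IHus' (W0 ++ w1) w2 W1) [Hs2 He2 Hn2]]]].
  rewrite -catA size_cat Hs1 in He2 Hn2; rewrite -catA size_cat Hs1 Hs2.
  split=> //; last by apply/nodes_ok_cat; rewrite size_tnodes.
  move=> j' i' a'.
  move: He2; case: (u) Hr1 => [|s' ts'] /= Hr1 He2; first exact: He2.
  by rewrite in_cons => /orP [/eqP [-> ->] | /He2]; [exact: Hr1 | apply].
case=> Hs He /nodes_ok_cat [Hn1]; rewrite size_tnodes => Hn2.
have [w1 [w2 [Ew Hs1]]] : exists w1 w2, w = w1 ++ w2 /\ size w1 = tdeg u.
  by apply: split_at; rewrite Hs leq_addr.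
subst w; rewrite -!catA in He Hn1 Hn2; exists w1, w2; split=> //; split.
  apply/(IHu W0 w1 (w2 ++ W1)); split=> // Hu a'; apply: He.
  by case: (u) Hu => //= *; rewrite mem_head.
apply/(IHus IHus' (W0 ++ w1) w2 W1); rewrite -catA size_cat Hs1.
split=> [|j' i' a' Hin|//]; first by move: Hs; rewrite size_cat Hs1 => /addnI.
by apply: He; case: (u) Hin => [|? ?] //= Hin; rewrite in_cons Hin orbT.
Qed.

Lemma tcompat_specP t : tcompat_spec t.
Proof.
elim/term_nested_ind: t => [|s ts IH] W0 w W1 P.
  by split=> [-> | [/size0nil ->]] //; split=> //; apply: nodes_ok_nil.
rewrite tnodes_nodeE; split.
  case=> a [w' [-> [Pa [Da /(ccompat_spec IH (W0 ++ [:: a]) w' W1) [Hs He Hn]]]]].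
  rewrite -catA size_cat addn1 in He Hn.
  split; [by rewrite /= Hs | by move=> _ b; rewrite onth_size_cat => -[<-] |].
  by apply/nodes_ok_cons; split=> // b; rewrite onth_size_cat => -[<-].
case: w => [|a w'] [//= [Hs]] Hr /nodes_ok_cons [/(_ a (onth_size_cat _ _ _)) [Da He] Hn].
apply/tcompat_nodeE; split; first exact: Hr (onth_size_cat _ _ _).
split=> //; apply/(ccompat_spec IH (W0 ++ [:: a]) w' W1).
by rewrite -catA size_cat addn1.
Qed.

Lemma fcompat_spec f (W0 w W1 : seq A) P :
  fcompat P f w <-> [/\ size w = fdeg f,
    forall i a, i \in (fnodes f (size W0)).1 -> onth (W0 ++ w ++ W1) i = Some a -> P a
  & nodes_ok (W0 ++ w ++ W1) (size W0) (fnodes f (size W0)).2].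
Proof.
elim: f W0 w W1 => [|t f IH] W0 w W1 /=.
  by split=> [-> | [/size0nil ->]] //; split=> //; apply: nodes_ok_nil.
rewrite /fdeg /= -/(fdeg f) size_tnodes; split.
  case=> w1 [w2 [-> [/(tcompat_specP t W0 w1 (w2 ++ W1)) [Hs1 Hr1 Hn1]
                    /(IH (W0 ++ w1) w2 W1) [Hs2 Hr2 Hn2]]]].
  rewrite -catA size_cat Hs1 in Hr2 Hn2; rewrite -catA size_cat Hs1 Hs2.
  split=> //; last by apply/nodes_ok_cat; rewrite size_tnodes.
  move=> i a; move: Hr2; case: (t) Hr1 => [|s ts] /= Hr1 Hr2; first exact: Hr2.
  by rewrite in_cons => /orP [/eqP -> | /Hr2]; [exact: Hr1 | apply].
case=> Hs Hr /nodes_ok_cat [Hn1]; rewrite size_tnodes => Hn2.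
have [w1 [w2 [Ew Hs1]]] : exists w1 w2, w = w1 ++ w2 /\ size w1 = tdeg t.
  by apply: split_at; rewrite Hs leq_addr.
subst w; rewrite -!catA in Hr Hn1 Hn2; exists w1, w2; split=> //; split.
  apply/(tcompat_specP t W0 w1 (w2 ++ W1)); split=> // Ht a; apply: Hr.
  by case: (t) Ht => //= *; rewrite mem_head.
apply/(IH (W0 ++ w1) w2 W1); rewrite -catA size_cat Hs1.
split=> [|i a Hin|//]; first by move: Hs; rewrite size_cat Hs1 => /addnI.
by apply: Hr; case: (t) Hin => [|? ?] //= Hin; rewrite in_cons Hin orbT.
Qed.

Lemma compatibleE (w : seq A) f : compatible w f <-> fcompat (@aR S A) f w.
Proof.
rewrite (fcompat_spec f [::] w [::]) /= cats0; split.
  case=> Hs Hr HD HE; split=> // k s es a Hk; rewrite add0n => Hw.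
  by split=> [|j i' a' Hin]; [apply: HD Hk Hw | apply: HE Hk Hin Hw].
case=> Hs Hr HN; split=> // [i s es a Hi Hw | i s es j i' a a' Hi Hin Hw].
  by case: (HN i s es a Hi Hw).
by case: (HN i s es a Hi Hw) => _; apply.
Qed.

End Compatibility.

Notation ccompat := (ccompat_with (@tcompat _ _)).

Section Indicator.
Variable K : fieldType.

Lemma ind_iff (P Q : Prop) : (P <-> Q) -> ind P = ind Q :> K.
Proof.
rewrite /ind => HPQ.
by case: excluded_middle_informative => HP; case: excluded_middle_informative => HQ //;
  exfalso; tauto.
Qed.

Lemma indT (P : Prop) : P -> ind P = 1 :> K.
Proof. by rewrite /ind; case: excluded_middle_informative. Qed.

Lemma indF (P : Prop) : ~ P -> ind P = 0 :> K.
Proof. by rewrite /ind; case: excluded_middle_informative. Qed.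

Lemma ind_and (P Q : Prop) : ind (P /\ Q) = ind P * ind Q :> K.
Proof.
rewrite /ind; case: excluded_middle_informative => HPQ;
case: excluded_middle_informative => HP; case: excluded_middle_informative => HQ;
by rewrite ?mulr1 ?mulr0 //; exfalso; tauto.
Qed.

Lemma ind_split_sum (T : Type) (P Q : seq T -> Prop) n (w : seq T) :
  (forall w1, P w1 -> size w1 = n) ->
  ind (exists w1 w2, w = w1 ++ w2 /\ P w1 /\ Q w2) =
  \sum_(0 <= m < (size w).+1) ind (P (take m w)) * ind (Q (drop m w)) :> K.
Proof.
move=> HP; have P_take m : (m <= size w)%N -> m != n -> ind (P (take m w)) = 0 :> K.
  by move=> Hm Hmn; apply: indF => /HP; rewrite size_takel // => /eqP; apply/negP.
case: (leqP n (size w)) => Hn.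
  rewrite (bigD1_seq n) ?iota_uniq ?mem_index_iota ?ltnS //= big1_seq ?addr0.
    rewrite -ind_and; apply: ind_iff; split=> [[w1 [w2 [-> [H1 H2]]]] | [H1 H2]].
      by rewrite -(HP _ H1) take_size_cat // drop_size_cat.
    by exists (take n w), (drop n w); rewrite cat_take_drop.
  move=> m /andP [Hmn]; rewrite mem_index_iota ltnS => Hm.
  by rewrite P_take ?mul0r.
rewrite big1_seq => [|m]; last first.
  by rewrite mem_index_iota ltnS => /andP [_ Hm]; rewrite P_take ?mul0r // neq_ltn (leq_ltn_trans Hm Hn).
apply: indF => -[w1 [w2 [Ew [H1 _]]]].
by move: Hn; rewrite Ew size_cat (HP _ H1) ltnNge leq_addr.
Qed.

Lemma ind_fcompat_cat (S : Type) (A : alphabet S) (P : A -> Prop) f1 f2 (w : seq A) :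
  ind (fcompat P (f1 ++ f2) w) = \sum_(0 <= m < (size w).+1)
     ind (fcompat P f1 (take m w)) * ind (fcompat P f2 (drop m w)) :> K.
Proof.
by rewrite (ind_iff (fcompat_cat _ _ _ _)); apply: ind_split_sum => w1; exact: fcompat_size.
Qed.

End Indicator.

Arguments shuffle : simpl never.

Section Shuffle.
Variables (K : fieldType) (A1 A2 : Type).

Lemma big_shuffle (F : seq (A1 + A2) -> K) (w1 : seq A1) (w2 : seq A2) :
  \sum_(w <- shuffle w1 w2) F w =
    (if (w1, w2) is ([::], [::]) then F [::] else 0)
  + (if w1 is a :: u then \sum_(w <- shuffle u w2) F (inl a :: w) else 0)
  + (if w2 is b :: v then \sum_(w <- shuffle w1 v) F (inr b :: w) else 0).
Proof.
case: w1 => [|a u]; case: w2 => [|b v] /=.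
- by rewrite big_seq1 !addr0.
- by rewrite !big_seq1 !add0r.
- by case: u => [|? ?]; rewrite !big_seq1 add0r addr0.
- by rewrite big_cat !big_map add0r.
Qed.

Lemma big_shuffle_ind_nil (w1 : seq A1) (w2 : seq A2) :
  \sum_(w <- shuffle w1 w2) ind (w = [::]) = ind (w1 = [::]) * ind (w2 = [::]) :> K.
Proof.
have cons0 (T : Type) (x : T) s : ind (x :: s = [::]) = 0 :> K by apply: indF.
have sum_cons0 (ws : seq (seq (A1 + A2))) x :
    \sum_(w <- ws) ind (x :: w = [::]) = 0 :> K by rewrite big1 // => w _; apply: indF.
rewrite big_shuffle; case: w1 => [|a u]; case: w2 => [|b v];
  by rewrite /= ?sum_cons0 ?cons0 ?(indT K (erefl [::])) ?mulr0 ?mul0r ?mulr1 ?addr0.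
Qed.

Lemma big_shuffle_ind_map_inr (Q : seq A2 -> Prop) (w1 : seq A1) (v : seq A2) :
  \sum_(w <- shuffle w1 v) ind (exists w2, w = map inr w2 /\ Q w2) =
  (if w1 is [::] then ind (Q v) else 0) :> K.
Proof.
case: w1 => [|a u].
  rewrite big_seq1; apply: ind_iff; split=> [[w2 [/inj_map Ew HQ]] | HQ].
    by rewrite (Ew (@inr_inj _ _)).
  by exists v.
have no_inl Q' v' : \sum_(w <- shuffle u v')
    ind (exists w2, inl a :: w = map inr w2 /\ Q' w2) = 0 :> K.
  by rewrite big1 // => w _; apply: indF => -[[|? ?] []].
elim: v Q => [|b v IH] Q; rewrite big_shuffle /= no_inl !add0r ?addr0 //.
apply: etrans (IH (fun w2 => Q (b :: w2))); apply: eq_bigr => w _; apply: ind_iff.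
split=> [[w2' [Ew HQ]] | [w2 [-> HQ]]]; last by exists (b :: w2).
by case: w2' Ew HQ => [|c w2] //= [<- ->] HQ; exists w2.
Qed.

Variable H : seq (A1 + A2) -> K.

Definition conv_shuffle (G : seq (A1 + A2) -> K) (w1 : seq A1) (w2 : seq A2) :=
  \sum_(w <- shuffle w1 w2) \sum_(0 <= m < (size w).+1) G (take m w) * H (drop m w).

Definition shuffle_conv (G : seq (A1 + A2) -> K) (w1 : seq A1) (w2 : seq A2) :=
  \sum_(0 <= i < (size w1).+1) \sum_(0 <= k < (size w2).+1)
    (\sum_(w <- shuffle (take i w1) (take k w2)) G w) *
    (\sum_(w <- shuffle (drop i w1) (drop k w2)) H w).

Lemma conv_shuffleE G w1 w2 : conv_shuffle G w1 w2 =
  G [::] * \sum_(w <- shuffle w1 w2) H w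
  + (if w1 is a :: u then conv_shuffle (fun w => G (inl a :: w)) u w2 else 0)
  + (if w2 is b :: v then conv_shuffle (fun w => G (inr b :: w)) w1 v else 0).
Proof.
rewrite /conv_shuffle.
under eq_bigr do rewrite big_nat_recl //.
rewrite big_split /= mulr_sumr -addrA; congr (_ + _).
  by apply: eq_bigr => w _; rewrite take0 drop0.
by rewrite big_shuffle; case: w1 => [|a u]; case: w2 => [|b v];
  rewrite /= ?big_geq ?add0r ?addr0.
Qed.

Lemma big_nat_first (F : nat -> K) n :
  (forall i, (i < n)%N -> F i.+1 = 0) -> \sum_(0 <= i < n.+1) F i = F 0%N.
Proof.
move=> HF; rewrite big_nat_recl // big1_seq ?addr0 // => i.
by rewrite mem_index_iota => /andP [_]; apply: HF.
Qed.

Lemma shuffle_convE G w1 w2 : shuffle_conv G w1 w2 =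
  G [::] * \sum_(w <- shuffle w1 w2) H w
  + (if w1 is a :: u then shuffle_conv (fun w => G (inl a :: w)) u w2 else 0)
  + (if w2 is b :: v then shuffle_conv (fun w => G (inr b :: w)) w1 v else 0).
Proof.
pose SH (u1 : seq A1) (u2 : seq A2) i k :=
  \sum_(w <- shuffle (drop i u1) (drop k u2)) H w.
have first_term : \sum_(0 <= i < (size w1).+1) \sum_(0 <= k < (size w2).+1)
    (if (take i w1, take k w2) is ([::], [::]) then G [::] else 0) * SH w1 w2 i k
    = G [::] * \sum_(w <- shuffle w1 w2) H w.
  rewrite big_nat_first => [|i]; last first.
    by case: w1 => [|a u] //= _; rewrite big1 // => k _; rewrite mul0r.
  rewrite big_nat_first => [|k]; last by rewrite take0; case: w2 => [|b v] //= _; rewrite mul0r.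
  by rewrite /SH !take0 !drop0.
have inl_term : \sum_(0 <= i < (size w1).+1) \sum_(0 <= k < (size w2).+1)
    (if take i w1 is a :: u then \sum_(w <- shuffle u (take k w2)) G (inl a :: w)
     else 0) * SH w1 w2 i k
    = if w1 is a :: u then shuffle_conv (fun w => G (inl a :: w)) u w2 else 0.
  case: (w1) => [|a u] /=.
    by rewrite big_nat1 big1 // => k _; rewrite mul0r.
  by rewrite big_nat_recl // big1 ?add0r // => k _; rewrite take0 mul0r.
have inr_term : \sum_(0 <= i < (size w1).+1) \sum_(0 <= k < (size w2).+1)
    (if take k w2 is b :: v then \sum_(w <- shuffle (take i w1) v) G (inr b :: w)
     else 0) * SH w1 w2 i k
    = if w2 is b :: v then shuffle_conv (fun w => G (inr b :: w)) w1 v else 0.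
  case: (w2) => [|b v] /=.
    by rewrite big1 // => i _; rewrite big_nat1 mul0r.
  by apply: eq_bigr => i _; rewrite big_nat_recl // take0 mul0r add0r.
rewrite -first_term -inl_term -inr_term -!big_split; apply: eq_bigr => i _.
by rewrite -!big_split; apply: eq_bigr => k _; rewrite big_shuffle !mulrDl.
Qed.

(* Both sides obey the recursion obtained by removing the first letter of the
   shuffled word. *)
Lemma conv_shuffle_exchange G w1 w2 : conv_shuffle G w1 w2 = shuffle_conv G w1 w2.
Proof.
elim: w1 w2 G => [|a u IHu] w2; elim: w2 => [|b v IHv] G;
  by rewrite conv_shuffleE shuffle_convE ?IHu ?IHv.
Qed.

End Shuffle.

Lemma big_conv_mulr_exchange (K : fieldType) (X Y : Type) (xs : seq X) (ys : seq Y)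
    (n1 n2 : nat) (al be : X -> nat -> K) (ga de : Y -> nat -> K) :
  \sum_(x <- xs) \sum_(y <- ys)
     (\sum_(0 <= i < n1) al x i * ga y i) * (\sum_(0 <= k < n2) be x k * de y k)
  = \sum_(0 <= i < n1) \sum_(0 <= k < n2)
     (\sum_(x <- xs) al x i * be x k) * (\sum_(y <- ys) ga y i * de y k).
Proof.
transitivity (\sum_(x <- xs) \sum_(y <- ys) \sum_(0 <= i < n1) \sum_(0 <= k < n2)
                (al x i * be x k) * (ga y i * de y k)).
  apply: eq_bigr => x _; apply: eq_bigr => y _; rewrite big_distrlr /=.
  by apply: eq_bigr => i _; apply: eq_bigr => k _; rewrite mulrACA.
transitivity (\sum_(0 <= i < n1) \sum_(0 <= k < n2) \sum_(x <- xs) \sum_(y <- ys)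
                (al x i * be x k) * (ga y i * de y k)).
  under eq_bigr => x _ do rewrite exchange_big.
  under eq_bigr => x _ do under eq_bigr => i _ do rewrite exchange_big.
  by rewrite exchange_big; apply: eq_bigr => i _; rewrite exchange_big.
by apply: eq_bigr => i _; apply: eq_bigr => k _; rewrite big_distrlr.
Qed.

Arguments tcompat : simpl never.

Section DisjointSum.
Variables (S : Type) (A1 A2 : alphabet S).
Local Notation D := (dsum A1 A2).

Definition inr_closed_spec (t : term S) := forall P : D -> Prop,
  (forall a, ~ P (inl a)) -> forall w,
  tcompat P t w <-> exists w2, w = map inr w2 /\ tcompat (fun b => P (inr b)) t w2.

Lemma ccompat_dsum_inr_spec ts : AllP inr_closed_spec ts -> forall (b : A2) j w,
  ccompat (inr b : D) j ts w <-> exists w2, w = map inr w2 /\ ccompat b j ts w2.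
Proof.
elim: ts => [_ | u us IHus [IHu IHus']] b j w /=.
  by split=> [-> | [w2 [-> ->]]]; first exists [::].
split=> [[w1 [w2 [-> [/(IHu _ (fun _ => id)) [v1 [-> H1]]
                     /(IHus IHus') [v2 [-> H2]]]]]] | [w2 [-> [v1 [v2 [-> [H1 H2]]]]]]].
  by exists (v1 ++ v2); rewrite map_cat; split=> //; exists v1, v2.
exists (map inr v1), (map inr v2); rewrite map_cat; split=> //; split.
  by apply/(IHu _ (fun _ => id)); exists v1.
by apply/IHus => //; exists v2.
Qed.

(* No edge leads from [A2] back to [A1]. *)
Lemma tcompat_dsum_inr t : inr_closed_spec t.
Proof.
elim/term_nested_ind: t => [|s ts IH] P noP w.
  by split=> [-> | [w2 [-> ->]]]; first exists [::].
split.
  case: w => [|[a|b] w]; first by case=> a [w' []].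
    by case/tcompat_nodeE=> /noP.
  case/tcompat_nodeE=> Pb [Db Hts].
  have [w2 [-> H]] := (ccompat_dsum_inr_spec IH b 1 w).1 Hts.
  by exists (b :: w2); split=> //; apply/tcompat_nodeE.
case=> -[|b w2] [->]; first by case=> ? [? []].
move=> /tcompat_nodeE [Pb [Db Hts]]; apply/tcompat_nodeE; do 2!split=> //.
by apply/(ccompat_dsum_inr_spec IH); exists w2.
Qed.

Lemma ccompat_dsum_inr ts (b : A2) j (w : seq D) :
  ccompat (inr b : D) j ts w <-> exists w2, w = map inr w2 /\ ccompat b j ts w2.
Proof. exact/ccompat_dsum_inr_spec/AllP_all/tcompat_dsum_inr. Qed.

End DisjointSum.

Section Coproduct.
Variables (K : fieldType) (S : Type) (A1 A2 : alphabet S).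
Local Notation D := (dsum A1 A2).

Definition dsum_root (P1 : A1 -> Prop) (c : D) : Prop :=
  match c with inl a => P1 a | inr b => aR b end.

Definition shuffle_tcount P1 t (u1 : seq A1) (u2 : seq A2) : K :=
  \sum_(w <- shuffle u1 u2) ind (tcompat (dsum_root P1) t w).
Definition decomp_tcount P1 t (u1 : seq A1) (u2 : seq A2) : K :=
  \sum_(x <- decomps t) ind (tcompat P1 x.1 u1) * ind (fcompat (@aR S A2) x.2 u2).
Definition shuffle_ccount (a : A1) j ts (u1 : seq A1) (u2 : seq A2) : K :=
  \sum_(w <- shuffle u1 u2) ind (ccompat (inl a : D) j ts w).
Definition decomp_ccount (a : A1) j ts (u1 : seq A1) (u2 : seq A2) : K :=
  \sum_(l <- prodseq (map (@decomps S) ts))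
    ind (ccompat a j (map fst l) u1) * ind (fcompat (@aR S A2) (flatten (map snd l)) u2).

Lemma shuffle_decomp_ccount ts :
  AllP (fun t => forall P1 u1 u2, shuffle_tcount P1 t u1 u2 = decomp_tcount P1 t u1 u2) ts ->
  forall a j u1 u2, shuffle_ccount a j ts u1 u2 = decomp_ccount a j ts u1 u2.
Proof.
elim: ts => [_ | c cs IHcs [IHc IHcs']] a j u1 u2.
  by rewrite /shuffle_ccount /decomp_ccount /= big_seq1 big_shuffle_ind_nil.
transitivity (@conv_shuffle K _ _ (fun w => ind (ccompat (inl a : D) j.+1 cs w))
                 (fun w => ind (tcompat (dsum_root (aE j a)) c w)) u1 u2).
  by apply: eq_bigr => w _; apply: ind_split_sum => w1; exact: tcompat_size.
rewrite conv_shuffle_exchange /shuffle_conv.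
transitivity (\sum_(0 <= i < (size u1).+1) \sum_(0 <= k < (size u2).+1)
   decomp_tcount (aE j a) c (take i u1) (take k u2) *
   decomp_ccount a j.+1 cs (drop i u1) (drop k u2)).
  by apply: eq_bigr => i _; apply: eq_bigr => k _; rewrite -(IHcs IHcs') -IHc.
rewrite /decomp_ccount /= big_flatten /= big_map -big_conv_mulr_exchange.
apply: eq_bigr => x _; rewrite big_map; apply: eq_bigr => l _ /=.
rewrite ind_fcompat_cat; congr (_ * _).
by apply: esym; apply: ind_split_sum => w1; exact: tcompat_size.
Qed.

Lemma shuffle_node_inr_root P1 s ts (u1 : seq A1) (b : A2) v :
  \sum_(w <- shuffle u1 v) ind (tcompat (dsum_root P1) (Node s ts) (inr b :: w)) =
  (if u1 is [::] then ind (tcompat (@aR S A2) (Node s ts) (b :: v)) else 0) :> K.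
Proof.
rewrite -(big_shuffle_ind_map_inr _ (fun w2 => tcompat (@aR S A2) (Node s ts) (b :: w2))).
apply: eq_bigr => w _; apply: ind_iff.
rewrite tcompat_nodeE ccompat_dsum_inr; split=> [[Rb [Db [w2 [-> H]]]] | [w2 [->]]].
  by exists w2; split=> //; apply/tcompat_nodeE.
by case/tcompat_nodeE=> Rb [Db H]; do 2!split=> //; exists w2.
Qed.

Lemma shuffle_node_tcount P1 s ts u1 u2 : shuffle_tcount P1 (Node s ts) u1 u2 =
  if u1 is a :: r then ind (P1 a) * (ind (aD s a) * shuffle_ccount a 1 ts r u2)
  else ind (tcompat (@aR S A2) (Node s ts) u2).
Proof.
have inl_root a r u : \sum_(w <- shuffle r u)
    ind (tcompat (dsum_root P1) (Node s ts) (inl a :: w)) =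
    ind (P1 a) * (ind (aD s a) * shuffle_ccount a 1 ts r u).
  rewrite /shuffle_ccount !mulr_sumr; apply: eq_bigr => w _.
  by rewrite (ind_iff K (tcompat_nodeE _ _ _ _ _)) !ind_and.
have nil0 : ind (tcompat (dsum_root P1) (Node s ts) [::]) = 0 :> K.
  by apply: indF => -[? [? []]].
rewrite /shuffle_tcount big_shuffle nil0.
case: u1 => [|a r]; case: u2 => [|b v];
  rewrite ?inl_root ?shuffle_node_inr_root ?add0r ?addr0 //.
by apply/esym/indF => -[? [? []]].
Qed.

Lemma decomp_node_tcount P1 s ts u1 u2 : decomp_tcount P1 (Node s ts) u1 u2 =
  if u1 is a :: r then ind (P1 a) * (ind (aD s a) * decomp_ccount a 1 ts r u2)
  else ind (tcompat (@aR S A2) (Node s ts) u2).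
Proof.
rewrite /decomp_tcount /= big_cons big_map (ind_iff K (fcompat_seq1 _ _ _)).
case: u1 => [|a r] /=.
  rewrite (indT K (erefl _)) mul1r big1 ?addr0 // => l _.
  by rewrite indF ?mul0r // => -[? [? []]].
rewrite (@indF K (_ :: _ = _)) // mul0r add0r /decomp_ccount !mulr_sumr.
apply: eq_bigr => l _.
by rewrite (ind_iff K (tcompat_nodeE _ _ _ _ _)) !ind_and !mulrA.
Qed.

(* A word over [A1 ++ A2] compatible with [t] spells an upper part [t'] of
   [t] in [A1] followed, below it, by the forest [t_1 ... t_|t'|] in [A2]. *)
Lemma shuffle_decomp_tcount t P1 u1 u2 :
  shuffle_tcount P1 t u1 u2 = decomp_tcount P1 t u1 u2.
Proof.
elim/term_nested_ind: t P1 u1 u2 => [|s ts IH] P1 u1 u2.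
  rewrite /shuffle_tcount /decomp_tcount /= big_seq1 big_shuffle_ind_nil.
  by congr (_ * _); apply: ind_iff; rewrite fcompat_seq1.
rewrite shuffle_node_tcount decomp_node_tcount.
by case: u1 => [|a r] //; rewrite shuffle_decomp_ccount.
Qed.

Lemma shuffle_fcompat_DeltaE f (w1 : seq A1) (w2 : seq A2) :
  \sum_(w <- shuffle w1 w2) ind (fcompat (@aR S D) f w) =
  \sum_(q <- DeltaE f) q.1.1 *
    (ind (fcompat (@aR S A1) q.1.2 w1) * ind (fcompat (@aR S A2) q.2 w2)) :> K.
Proof.
elim: f w1 w2 => [|t f IH] w1 w2.
  by rewrite big_shuffle_ind_nil big_seq1 mul1r.
transitivity (\sum_(0 <= i < (size w1).+1) \sum_(0 <= k < (size w2).+1)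
   decomp_tcount (@aR S A1) t (take i w1) (take k w2) *
   \sum_(q <- DeltaE f) q.1.1 * (ind (fcompat (@aR S A1) q.1.2 (drop i w1)) *
                                  ind (fcompat (@aR S A2) q.2 (drop k w2)))).
  transitivity (@conv_shuffle K _ _ (fun w => ind (fcompat (@aR S D) f w))
                  (fun w => ind (tcompat (@aR S D) t w)) w1 w2).
    by apply: eq_bigr => w _; apply: ind_split_sum => w'; exact: tcompat_size.
  rewrite conv_shuffle_exchange; apply: eq_bigr => i _; apply: eq_bigr => k _.
  by rewrite -IH -shuffle_decomp_tcount.
have rd_seq1 (x : term S) (u : seq A1) :
    ind (tcompat (@aR S A1) x u) = ind (fcompat (@aR S A1) (rd [:: x]) u) :> K.
  by apply: ind_iff; rewrite fcompat_rd fcompat_seq1.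
have rd_forest (g : forest S) (u : seq A2) :
    ind (fcompat (@aR S A2) g u) = ind (fcompat (@aR S A2) (rd g) u) :> K.
  by apply: ind_iff; rewrite fcompat_rd.
under eq_bigr => i _ do under eq_bigr => k _ do
  rewrite /decomp_tcount (eq_bigr _ (fun q _ => mulrA _ _ _)).
rewrite -big_conv_mulr_exchange /mulNN big_allpairs_dep /DeltaT big_map.
apply: eq_bigr => x _; apply: eq_bigr => q _.
rewrite !ind_fcompat_cat mul1r mulrA [q.1.1 * _]mulr_sumr; congr (_ * _); last first.
  by apply: eq_bigr => k _; rewrite rd_forest.
by apply: eq_bigr => i _; rewrite rd_seq1 mulrCA.
Qed.

End Coproduct.

Section Positions.
Variable S : Type.
Local Notation Ap := (Apos S).

Fixpoint cposword_with (tp : term S -> seq nat -> seq Ap) (ts : seq (term S))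
    (u : seq nat) (j : nat) : seq Ap :=
  if ts is c :: cs then tp c (rcons u j) ++ cposword_with tp cs u j.+1 else [::].

Fixpoint tposword (t : term S) (u : seq nat) {struct t} : seq Ap :=
  if t is Node s ts then (s, u) :: cposword_with tposword ts u 1 else [::].

Local Notation cposword := (cposword_with tposword).

Definition fposword (f : forest S) : seq Ap := flatten [seq tposword t [::] | t <- f].

Lemma tcompat_tposword t u (P : Ap -> Prop) :
  (forall s, P (s, u)) -> tcompat P t (tposword t u).
Proof.
elim/term_nested_ind: t u P => [|s ts IH] u P Pu //.
apply/tcompat_nodeE; do 2!split=> //.
suff Hc j : ccompat ((s, u) : Ap) j ts (cposword ts u j) by apply: Hc.
elim: ts IH j => [|c cs IHcs] //= [IHc IHcs'] j.
exists (tposword c (rcons u j)), (cposword cs u j.+1); do 2!split=> //; last exact: IHcs.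
by apply: IHc => s'; exists 0%N; rewrite cats1.
Qed.

Lemma fcompat_fposword f : fcompat (@aR S Ap) f (fposword f).
Proof.
elim: f => [|t f IH] //=; exists (tposword t [::]), (fposword f); do 2!split=> //.
by apply: tcompat_tposword => s; exists 0%N.
Qed.

Definition zero_free (b : Ap) : bool := 0%N \notin b.2.

Lemma tposword_zero_free t u : 0%N \notin u -> all zero_free (tposword t u).
Proof.
elim/term_nested_ind: t u => [|s ts IH] u u0 //=; rewrite /zero_free u0 /=.
suff Hc j : (0 < j)%N -> all zero_free (cposword ts u j) by apply: Hc.
elim: ts IH j => [|c cs IHcs] //= [IHc IHcs'] j j_gt0.
by rewrite all_cat IHc ?IHcs // -cats1 mem_cat negb_or u0 mem_seq1 eq_sym -lt0n.
Qed.

Lemma fposword_zero_free f : all zero_free (fposword f).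
Proof. by elim: f => [|t f IH] //=; rewrite all_cat tposword_zero_free. Qed.

(* The root of a compatible word sits at an address [u ++ 0^l]; avoiding the
   letter [0] forces [l = 0], so every address is the canonical one. *)
Lemma tposword_unique t u (P : Ap -> Prop) :
  (forall b, P b -> zero_free b -> b.2 = u) ->
  forall w, tcompat P t w -> all zero_free w -> w = tposword t u.
Proof.
elim/term_nested_ind: t u P => [|s ts IH] u P HP [|a w] //=; first by case=> ? [? []].
case/tcompat_nodeE=> Pa [Da Hts] /andP [za zw]; move: Hts zw.
have -> : a = (s, u) by rewrite [a]surjective_pairing (Da : a.1 = s) (HP _ Pa za).
move=> Hts zw; congr (_ :: _); move: Hts zw.
suff Hc j w' : ccompat ((s, u) : Ap) j ts w' -> all zero_free w' -> w' = cposword ts u j.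
  exact: Hc.
elim: ts IH j w' => [|c cs IHcs] //= [IHc IHcs'] j w'.
case=> w1 [w2 [-> [H1 H2]]]; rewrite all_cat => /andP [z1 z2].
congr (_ ++ _); last exact: IHcs.
apply: IHc H1 z1 => b [l Eb]; rewrite /zero_free Eb; case: l {Eb} => [_|l].
  by rewrite cats1.
by rewrite mem_cat !in_cons eqxx !orbT.
Qed.

Lemma fposword_unique f w : fcompat (@aR S Ap) f w -> all zero_free w -> w = fposword f.
Proof.
elim: f w => [|t f IH] w //=.
case=> w1 [w2 [-> [H1 H2]]]; rewrite all_cat => /andP [z1 z2].
congr (_ ++ _); last exact: IH.
by apply: tposword_unique H1 z1 => b [[|l] Eb] //; rewrite /zero_free Eb inE eqxx.
Qed.

Lemma tposword_addr t u : AllP (fun b : Ap => exists z, b.2 = u ++ z) (tposword t u).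
Proof.
elim/term_nested_ind: t u => [|s ts IH] u //=; split; first by exists [::]; rewrite cats0.
suff Hc j : AllP (fun b : Ap => exists z, b.2 = u ++ z) (cposword ts u j) by apply: Hc.
elim: ts IH j => [|c cs IHcs] //= [IHc IHcs'] j; apply: AllP_cat; last exact: IHcs.
move: (IHc (rcons u j)); elim: (tposword c _) => [|b l IHl] //= [[z Hz] H].
by split; [exists (j :: z); rewrite Hz -cats1 -catA | exact: IHl].
Qed.

Lemma cposword_addr ts u j :
  AllP (fun b : Ap => exists j' z, (j <= j')%N /\ b.2 = u ++ j' :: z) (cposword ts u j).
Proof.
elim: ts j => [|c cs IHcs] j //=; apply: AllP_cat.
  move: (tposword_addr c (rcons u j)); elim: (tposword c _) => [|b l IHl] //= [[z Hz] H].
  by split; [exists j, z; rewrite Hz -cats1 -catA | exact: IHl].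
move: (IHcs j.+1); elim: (cposword cs u j.+1) => [|b l IHl] //= [[j' [z [Hj Hz]]] H].
by split; [exists j', z; split=> //; apply: ltnW | exact: IHl].
Qed.

Definition outside (v : seq nat) (r : seq Ap) : Prop :=
  if r is b :: _ then ~ (exists z, b.2 = v ++ z) else True.
Definition outside_children (v : seq nat) (r : seq Ap) : Prop :=
  if r is b :: _ then forall j z, b.2 <> v ++ j :: z else True.

Lemma outside_children_of v r : outside v r -> outside_children v r.
Proof. by case: r => [|b r] //= Hr j z Hb; apply: Hr; exists (j :: z). Qed.

Variable ar : S -> nat.

(* Words of positions form a prefix code: [tposword t v] is recognised as the
   prefix of a word whose continuation leaves the subtree at [v]. *)
Definition tposword_inj_spec (t : term S) := wf_term ar t ->
  forall t' v r1 r2, wf_term ar t' ->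
  tposword t v ++ r1 = tposword t' v ++ r2 -> outside v r1 -> outside v r2 ->
  t = t' /\ r1 = r2.

Lemma cposword_inj ts : AllP tposword_inj_spec ts -> all (wf_term ar) ts ->
  forall ts' u j r1 r2, all (wf_term ar) ts' -> size ts = size ts' ->
  cposword ts u j ++ r1 = cposword ts' u j ++ r2 ->
  outside_children u r1 -> outside_children u r2 -> ts = ts' /\ r1 = r2.
Proof.
elim: ts => [_ _ [|c' cs'] u j r1 r2 //= _ _ -> // | c cs IHcs [IHc IHcs']].
case/andP=> wc wcs [|c' cs'] u j r1 r2 //= /andP [wc' wcs'] [Hsz].
rewrite -!catA => E O1 O2.
have next_outside r cs0 : outside_children u r -> outside (rcons u j) (cposword cs0 u j.+1 ++ r).
  move: (cposword_addr cs0 u j.+1) => + Or.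
  case: (cposword cs0 u j.+1) => [|b l] /=.
    case: r Or => [|b r] //= Or _ [z Hz]; apply: (Or j z); by rewrite Hz -cats1 -catA.
  case=> [[j' [z [Hj Hz]]] _] [z' Hz']; move: Hz'; rewrite Hz -cats1 -catA.
  move/eqP; rewrite eqseq_cat // eqxx /= eqseq_cons => /andP [/eqP Ej _].
  by move: Hj; rewrite Ej ltnn.
have [-> E2] := IHc wc c' (rcons u j) _ _ wc' E (next_outside _ _ O1) (next_outside _ _ O2).
by have [-> ->] := IHcs IHcs' wcs cs' u j.+1 r1 r2 wcs' Hsz E2 O1 O2.
Qed.

Lemma tposword_inj t : tposword_inj_spec t.
Proof.
elim/term_nested_ind: t => [|s ts IH] wt [|s' ts'] v r1 r2 wt' //=.
- by move=> -> /=; case; exists [::]; rewrite cats0.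
- by move=> <- _ /=; case; exists [::]; rewrite cats0.
case=> Es E O1 O2; subst s'; move: wt wt' => /andP [/eqP s1 w1] /andP [/eqP s2 w2].
by have [-> ->] := cposword_inj IH w1 w2 (etrans s1 (esym s2)) E
  (outside_children_of O1) (outside_children_of O2).
Qed.

Lemma fposword_inj f g : reduced f -> all (wf_term ar) f ->
  reduced g -> all (wf_term ar) g -> fposword f = fposword g -> f = g.
Proof.
have root_outside h : reduced h -> outside_children [::] (fposword h).
  by case: h => [|[|s ts] h].
elim: f g => [|[|s ts] f IH] [|[|s' ts'] g] //= rf /andP [/andP [/eqP s1 w1] wf]
  rg /andP [/andP [/eqP s2 w2] wg] [Es E]; subst s'.
have [-> E2] := cposword_inj (AllP_all _ (@tposword_inj)) w1 w2 (etrans s1 (esym s2)) E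
  (root_outside _ rf) (root_outside _ rg).
by rewrite (IH g rf wf rg wg E2).
Qed.

End Positions.

Section Coefficients.
Variables (K : fieldType) (S : Type).

Definition eqforest (f h : forest S) : bool :=
  if excluded_middle_informative (h = f) then true else false.

Lemma eqforestP f h : reflect (h = f) (eqforest f h).
Proof. by rewrite /eqforest; case: excluded_middle_informative; constructor. Qed.

Definition drop_forest (f : forest S) (x : Nvec K S) : Nvec K S :=
  [seq p <- x | ~~ eqforest f p.2].

Lemma Ncoef_cat (x y : Nvec K S) f : Ncoef (x ++ y) f = Ncoef x f + Ncoef y f.
Proof. exact: big_cat. Qed.

Lemma Ncoef_scale c (x : Nvec K S) f : Ncoef (scaleN c x) f = c * Ncoef x f.
Proof. by rewrite /Ncoef big_map mulr_sumr; apply: eq_bigr => p _; rewrite mulrA. Qed.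

Lemma Ncoef_drop_forest f (x : Nvec K S) h :
  Ncoef (drop_forest f x) h = Ncoef x h * ind (h <> f).
Proof.
rewrite /Ncoef big_filter big_mkcond mulr_suml; apply: eq_bigr => p _.
case: eqforestP => [Ep | Ep] /=; case: (classic (p.2 = h)) => Eh.
- by rewrite (indT K Eh) (indF K (P := h <> f)) ?mulr0 // => /(_ (etrans (esym Eh) Ep)).
- by rewrite (indF K Eh) !mulr0 mul0r.
- by rewrite (indT K Eh) (indT K (P := h <> f)) ?mulr1 // => Ehf; apply: Ep; rewrite Eh.
- by rewrite (indF K Eh) !mulr0 mul0r.
Qed.

Lemma big_Ncoef_split (g : forest S -> K) (x : Nvec K S) f :
  \sum_(p <- x) p.1 * g p.2 = Ncoef x f * g f + \sum_(p <- drop_forest f x) p.1 * g p.2.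
Proof.
rewrite /Ncoef /drop_forest big_filter mulr_suml (bigID (fun p => eqforest f p.2)) /=.
rewrite big_mkcond; congr (_ + _); apply: eq_bigr => p _; case: eqforestP => Ep.
  by rewrite Ep (indT K (erefl f)) mulr1.
by rewrite (indF K Ep) mulr0 mul0r.
Qed.

Lemma big_Ncoef0 (g : forest S -> K) (x : Nvec K S) :
  (forall f, Ncoef x f = 0) -> \sum_(p <- x) p.1 * g p.2 = 0.
Proof.
move: {2}(size x) (leqnn (size x)) => n.
elim: n x => [|n IH] [|p x] //= Hn Hx; rewrite ?big_nil //.
rewrite (big_Ncoef_split g _ p.2) Hx mul0r add0r; apply: IH => [|h].
  rewrite /drop_forest /=; case: eqforestP => // _.
  by rewrite size_filter (leq_trans (count_size _ _)).
by rewrite Ncoef_drop_forest Hx mul0r.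
Qed.

Lemma big_Ncoef_eq (g : forest S -> K) (x y : Nvec K S) :
  (forall f, Ncoef x f = Ncoef y f) ->
  \sum_(p <- x) p.1 * g p.2 = \sum_(p <- y) p.1 * g p.2.
Proof.
move=> Hxy; have : \sum_(p <- x ++ scaleN (-1) y) p.1 * g p.2 = 0.
  by apply: big_Ncoef0 => f; rewrite Ncoef_cat Ncoef_scale Hxy mulN1r subrr.
rewrite big_cat big_map /=; under [X in _ + X]eq_bigr do rewrite mulN1r mulNr.
by rewrite sumrN => /eqP; rewrite subr_eq0 => /eqP.
Qed.

Lemma Ncoef_invalid (ar : S -> nat) (x : Nvec K S) f :
  validN ar x -> ~~ (reduced f && all (wf_term ar) f) -> Ncoef x f = 0.
Proof.
elim: x => [|p x IH] /=; first by rewrite /Ncoef big_nil.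
case/andP=> /andP [rp wp] Vx Nf; rewrite /Ncoef big_cons -/(Ncoef x f) IH // addr0.
by rewrite (indF K) ?mulr0 // => Ef; move: Nf; rewrite -Ef rp wp.
Qed.

End Coefficients.

Section Realization.
Variables (K : fieldType) (S : Type).

Lemma rE_fcompat (A : alphabet S) f (w : seq A) : rE A f w = ind (fcompat (@aR S A) f w) :> K.
Proof. exact/ind_iff/compatibleE. Qed.

Lemma rA_homogeneous (A : alphabet S) n (x : Nvec K S) :
  all (fun p => fdeg p.2 == n) x -> forall w : seq A, size w != n -> rA A x w = 0.
Proof.
move=> + w Hw; elim: x => [|p x IH] /=; first by rewrite /rA big_nil.
case/andP=> /eqP Hp Hx; rewrite /rA big_cons -/(rA A x w) IH // addr0.
by rewrite rE_fcompat (indF K) ?mulr0 // => /fcompat_size Ew; move: Hw; rewrite Ew Hp eqxx.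
Qed.

Lemma rA_bounded (A : alphabet S) (x : Nvec K S) : bounded (rA A x).
Proof.
exists (sumn [seq fdeg p.2 | p <- x]) => w; elim: x => [|p x IH] /= Hw.
  by rewrite /rA big_nil.
rewrite /rA big_cons -/(rA A x w) IH; last exact: leq_ltn_trans (leq_addl _ _) Hw.
rewrite rE_fcompat (indF K) ?mulr0 ?addr0 // => /fcompat_size Ew.
by move: Hw; rewrite Ew ltnNge leq_addr.
Qed.

Lemma rA_Ncoef (A : alphabet S) (x y : Nvec K S) :
  (forall f, Ncoef x f = Ncoef y f) -> rA A x =1 rA A y.
Proof. by move=> Hxy w; apply: (big_Ncoef_eq (fun f => rE A f w)). Qed.

Lemma rA_add (A : alphabet S) (x y : Nvec K S) : rA A (addN x y) =1 (fun w => rA A x w + rA A y w).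
Proof. by move=> w; rewrite /rA big_cat. Qed.

Lemma rA_scale (A : alphabet S) c (x : Nvec K S) : rA A (scaleN c x) =1 (fun w => c * rA A x w).
Proof. by move=> w; rewrite /rA big_map mulr_sumr; apply: eq_bigr => p _; rewrite mulrA. Qed.

Lemma rA_one (A : alphabet S) : rA A (@oneN K S) =1 oneP.
Proof. by case=> [|a w]; rewrite /rA big_seq1 mul1r rE_fcompat; [apply: indT | apply: indF]. Qed.

Lemma rA_mul (A : alphabet S) (x y : Nvec K S) : rA A (mulN x y) =1 mulP (rA A x) (rA A y).
Proof.
move=> w; rewrite /rA /mulN /mulP big_allpairs_dep /=.
transitivity (\sum_(p <- x) \sum_(q <- y) \sum_(0 <= i < (size w).+1)
   (p.1 * rE A p.2 (take i w)) * (q.1 * rE A q.2 (drop i w))).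
  apply: eq_bigr => p _; apply: eq_bigr => q _.
  rewrite rE_fcompat ind_fcompat_cat mulr_sumr; apply: eq_bigr => i _.
  by rewrite !rE_fcompat mulrACA.
rewrite (eq_bigr _ (fun p _ => exchange_big _ _ _ _ _ _)) /= exchange_big big_mkord.
by apply: eq_bigr => i _; rewrite big_distrlr.
Qed.

Lemma theta_rA_dsum (A1 A2 : alphabet S) (x : Nvec K S) (w1 : seq A1) (w2 : seq A2) :
  theta (rA (dsum A1 A2) x) w1 w2 = rtens A1 A2 (Delta x) w1 w2.
Proof.
rewrite /theta /rA exchange_big /rtens /Delta big_flatten /= big_map.
apply: eq_bigr => p _; rewrite -mulr_sumr big_map.
have -> : \sum_(w <- shuffle w1 w2) rE (dsum A1 A2) p.2 w =
           \sum_(w <- shuffle w1 w2) ind (fcompat (@aR S (dsum A1 A2)) p.2 w) :> K.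
  by apply: eq_bigr => w _; apply: rE_fcompat.
rewrite shuffle_fcompat_DeltaE mulr_sumr; apply: eq_bigr => q _.
by rewrite /= !rE_fcompat mulrA.
Qed.

Lemma rA_Apos_fposword (ar : S -> nat) (x : Nvec K S) f :
  validN ar x -> reduced f -> all (wf_term ar) f ->
  rA (Apos S) x (fposword f) = Ncoef x f.
Proof.
move=> + rf wf; elim: x => [|p x IH] /=; first by rewrite /rA /Ncoef !big_nil.
case/andP=> /andP [rp wp] Vx; rewrite /rA /Ncoef !big_cons -/(rA _ x _) -/(Ncoef x f) IH //.
congr (_ * _ + _); rewrite rE_fcompat; apply: ind_iff; split => [Hp | <-].
  exact: fposword_inj rp wp rf wf (esym (fposword_unique Hp (fposword_zero_free f))).
exact: fcompat_fposword.
Qed.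

End Realization.

Lemma rA_Apos_inj (K : fieldType) (S : Type) (ar : S -> nat) (x y : Nvec K S) :
  validN ar x -> validN ar y -> rA (Apos S) x =1 rA (Apos S) y ->
  forall f, Ncoef x f = Ncoef y f.
Proof.
move=> Vx Vy Hxy f; case Vf: (reduced f && all (wf_term ar) f).
  by case/andP: Vf => rf wf; rewrite -(rA_Apos_fposword Vx rf wf) -(rA_Apos_fposword Vy rf wf).
by rewrite (Ncoef_invalid Vx) ?(Ncoef_invalid Vy) ?Vf.
Qed.

Lemma dsum_assoc_iso (S : Type) (A1 A2 A3 : alphabet S) :
  @alph_iso S (dsum (dsum A1 A2) A3) (dsum A1 (dsum A2 A3)) (@sum_assocr A1 A2 A3).
Proof.
split.
- exists (fun y : A1 + (A2 + A3) =>
    match y with inl a => inl (inl a) | inr (inl b) => inl (inr b) | inr (inr c) => inr c end).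
    by case=> [[a|b]|c].
  by case=> [a|[b|c]].
- by case=> [[a|b]|c].
- by move=> s [[a|b]|c].
- by move=> j [[a|b]|c] [[a'|b']|c'].
Qed.

Theorem theorem4p8 (K : fieldType) (charK0 : [pchar K] =i pred0)
    (S : Type) (ar : S -> nat) :
  (forall A1 A2 A3 : alphabet S,
     @alph_iso S (dsum (dsum A1 A2) A3) (dsum A1 (dsum A2 A3))
              (@sum_assocr A1 A2 A3))
  /\
  (forall A : alphabet S,
     (forall x : Nvec K S, validN ar x -> bounded (rA A x)) /\
         (forall x y : Nvec K S, validN ar x -> validN ar y ->
            (forall f, Ncoef x f = Ncoef y f) -> rA A x =1 rA A y) /\
         (forall x y : Nvec K S, validN ar x -> validN ar y ->
            rA A (addN x y) =1 (fun w => rA A x w + rA A y w)) /\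
         (forall (c : K) (x : Nvec K S), validN ar x ->
            rA A (scaleN c x) =1 (fun w => c * rA A x w)) /\
         rA A (@oneN K S) =1 oneP /\
         (forall x y : Nvec K S, validN ar x -> validN ar y ->
            rA A (mulN x y) =1 mulP (rA A x) (rA A y)) /\
         (forall (n : nat) (x : Nvec K S), validN ar x ->
            all (fun p => fdeg p.2 == n) x ->
            forall w : seq A, size w != n -> rA A x w = 0))
  /\
  (forall (A1 A2 : alphabet S) (x : Nvec K S), validN ar x ->
     forall (w1 : seq A1) (w2 : seq A2),
       theta (rA (dsum A1 A2) x) w1 w2 = rtens A1 A2 (Delta x) w1 w2)
  /\
  (forall x y : Nvec K S, validN ar x -> validN ar y ->
     rA (Apos S) x =1 rA (Apos S) y ->
     forall f, Ncoef x f = Ncoef y f).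
Proof.
split; first exact: dsum_assoc_iso.
split.
  move=> A; split; first by move=> x _; apply: rA_bounded.
  split; first by move=> x y _ _; apply: rA_Ncoef.
  split; first by move=> x y _ _; apply: rA_add.
  split; first by move=> c x _; apply: rA_scale.
  split; first exact: rA_one.
  split; first by move=> x y _ _; apply: rA_mul.
  by move=> n x _; apply: rA_homogeneous.
split; first by move=> A1 A2 x _ w1 w2; apply: theta_rA_dsum.
exact: rA_Apos_inj.
Qed.
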